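(* For every prime $p$: (i) $\{(r,e,d)\in\mathscr{U}(p)\mid d=r\}=\mathscr{B}_+(p)$; (ii) $\{(r,e,d)\in\mathscr{U}(p)\mid d=r-1\}=\mathscr{B}_0(p)$; (iii) $\{(r,e,d)\in\mathscr{U}(p)\mid r=2\}=\{(r,e,d)\in\mathscr{B}(p)\mid r=2\}$.
   Context: Let $p$ be a prime. For integer triples $(r,e,d)$ put $g=\left\{red-\frac{d(d+1)}{2}(p-1)\right\}\big/\frac{r(r-1)}{2}\in\mathbb{Q}$. $\mathscr{U}(p)$ is the set of integer triples $(r,e,d)$ with $r\ge2$, $e\ge1$, $1\le d\le p$, $d(p-1)\le re\le r(p-1)$, $g>0$, and $g\in2\mathbb{Z}$ if $p\ne2$, $g\in\mathbb{Z}$ if $p=2$. $\mathscr{B}(p)=\mathscr{B}_+(p)\cup\mathscr{B}_0(p)\cup\mathscr{B}_-(p)$ where $\mathscr{B}_+(p)=\{(r,e,d): 2\le r\le p,\ e=p-1,\ d=r\}$, $\mathscr{B}_0(p)=\{(r,e,d): 2\le r\le p+1,\ (p-1)/2<e\le p-1,\ r(p-1-e)\le p-1,\ d=r-1\}$, $\mathscr{B}_-(p)=\{(r,e,d): r\ge2,\ (p-1)/2<e\le p-1,\ r(p-1-e)=p-1,\ d=r-2\}$ (integer triples). *)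

From HB Require Import structures.
From mathcomp Require Import all_boot all_order all_algebra.
Set Implicit Arguments. Unset Strict Implicit. Unset Printing Implicit Defensive.
Import Order.TTheory GRing.Theory Num.Theory.
Local Open Scope ring_scope.

Definition triple := (int * int * int)%type.

Definition gval (p : nat) (t : triple) : rat :=
  let: (r, e, d) := t in
  ((r * e * d)%:~R - (d * (d + 1))%:~R / 2 * (p%:R - 1))
    / ((r * (r - 1))%:~R / 2).

Definition inU (p : nat) (t : triple) : Prop :=
  let: (r, e, d) := t in
  2 <= r /\ 1 <= e /\ 1 <= d /\ d <= p%:Z /\
      d * (p%:Z - 1) <= r * e /\ r * e <= r * (p%:Z - 1) /\
      0 < gval p t /\
      (if p != 2%N then (gval p t / 2) \is a Num.int
       else gval p t \is a Num.int).

Definition inBplus (p : nat) (t : triple) : Prop :=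
  let: (r, e, d) := t in
  [/\ 2 <= r, r <= p%:Z, e = p%:Z - 1 & d = r].

(* (p-1)/2 < e is read over the rationals (equivalently 2e > p-1). *)
Definition inB0 (p : nat) (t : triple) : Prop :=
  let: (r, e, d) := t in
  2 <= r /\ r <= p%:Z + 1 /\
      (p%:R - 1) / 2 < (e%:~R : rat) /\ e <= p%:Z - 1 /\
      r * (p%:Z - 1 - e) <= p%:Z - 1 /\ d = r - 1.

Definition inBminus (p : nat) (t : triple) : Prop :=
  let: (r, e, d) := t in
  [/\ 2 <= r,
      (p%:R - 1) / 2 < (e%:~R : rat), e <= p%:Z - 1,
      r * (p%:Z - 1 - e) = p%:Z - 1 & d = r - 2].

Definition inB (p : nat) (t : triple) : Prop :=
  inBplus p t \/ inB0 p t \/ inBminus p t.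

From HB Require Import structures.
From mathcomp Require Import all_boot all_order all_algebra.
From mathcomp Require Import zify ring.
Import Order.TTheory GRing.Theory Num.Theory.
Local Open Scope ring_scope.

(* With [d = r] the inequalities [d(p-1) <= re <= r(p-1)] force [e = p-1], and
   then [g = p-1]; with [d = r-1] the formula collapses to [g = 2e - (p-1)].  Both
   values are integers, even ones when [p] is odd since [p-1] is then even, so the
   only real constraint is [g > 0], i.e. [2e > p-1] in the second case.  For
   [r = 2] the inequalities leave only [d = 2] or [d = 1], while [B_-] has no
   element with [r = 2] since it would need [2e = p-1]. *)

(* The last conjunct of [inU p t] is [admissible_g p (gval p t)] up to conversion. *)
Definition admissible_g (p : nat) (g : rat) : bool :=
  if p != 2%N then (g / 2) \is a Num.int else g \is a Num.int.

Lemma gvalE p (r e d : int) :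
  gval p (r, e, d) =
  (2 * r%:~R * e%:~R * d%:~R - d%:~R * (d%:~R + 1) * (p%:R - 1))
    / (r%:~R * (r%:~R - 1)).
Proof.
rewrite /gval invf_div mulrA !(intrM, intrB, intrD, rmorph1).
by congr (_ / _); field.
Qed.

Lemma intr_mul_pred_neq0 (R : numDomainType) (r : int) :
  2 <= r -> (r%:~R : R) * (r%:~R - 1) != 0.
Proof.
move=> r_ge2; rewrite -[1](rmorph1 (intmul 1 : int -> R)) -intrB -intrM intr_eq0.
by apply/eqP; nia.
Qed.

Lemma gval_diag_pred p (r : int) :
  2 <= r -> gval p (r, p%:Z - 1, r) = (p%:Z - 1)%:~R.
Proof.
move=> /(intr_mul_pred_neq0 rat) rr1_neq0; rewrite gvalE intrB -pmulrn rmorph1.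
by apply: (canLR (mulfK rr1_neq0)); ring.
Qed.

Lemma gval_subdiag p (r e : int) :
  2 <= r -> gval p (r, e, r - 1) = (2 * e - (p%:Z - 1))%:~R.
Proof.
move=> /(intr_mul_pred_neq0 rat) rr1_neq0; rewrite gvalE !(intrB, intrM) -pmulrn rmorph1.
by apply: (canLR (mulfK rr1_neq0)); ring.
Qed.

Lemma ltr_half_pred p (e : int) :
  ((p%:R - 1) / 2 < (e%:~R : rat)) = (p%:Z - 1 < 2 * e).
Proof. by rewrite -(ltr_int rat) ltr_pdivrMr // intrB intrM mulrC. Qed.

Lemma admissible_g_double_sub p (k : int) :
  prime p -> admissible_g p (2 * k - (p%:Z - 1))%:~R.
Proof.
rewrite /admissible_g => p_pr; have [_ /=|p_neq2 /=] := eqVneq p 2%N.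
  exact: intr_int.
have p_odd : odd p by case: (even_prime p_pr) => // p2; rewrite p2 in p_neq2.
have p_half : p%:Z - 1 = 2 * (p./2)%:Z.
  by rewrite -{1}(odd_double_half p) p_odd /=; lia.
by rewrite p_half -mulrBr intrM mulrAC (mulfV (_ : 2 != 0)) // mul1r intr_int.
Qed.

Section Classification.

Variable p : nat.
Hypothesis p_pr : prime p.

Let p_ge2 : 2 <= p%:Z.
Proof. by have := prime_gt1 p_pr; lia. Qed.

Lemma inU_diag (r e : int) : inU p (r, e, r) <-> inBplus p (r, e, r).
Proof.
split=> [[r_ge2 [_ [_ [r_lep [lo [hi _]]]]]] | [r_ge2 r_lep -> _]].
  by split=> //; nia.
do 6!(split; first nia); rewrite gval_diag_pred //.
split; first by rewrite ltr0z; lia.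
have -> : p%:Z - 1 = 2 * (p%:Z - 1) - (p%:Z - 1) by ring.
exact: admissible_g_double_sub.
Qed.

Lemma inU_subdiag (r e : int) : inU p (r, e, r - 1) <-> inB0 p (r, e, r - 1).
Proof.
split=> [[r_ge2 [_ [_ [d_lep [lo [hi [g_gt0 _]]]]]]]
        | [r_ge2 [r_lep [e_gt [e_lep [rgap _]]]]]].
  rewrite gval_subdiag // ltr0z in g_gt0.
  by rewrite /inB0 ltr_half_pred; do 5!(split; first nia).
rewrite ltr_half_pred in e_gt.
do 6!(split; first nia); rewrite gval_subdiag //.
split; [by rewrite ltr0z; lia | exact: admissible_g_double_sub].
Qed.

Lemma inU_two_diag_or_subdiag (e d : int) : inU p (2, e, d) -> d = 2 \/ d = 1.
Proof. by move=> [_ [_ [d_ge1 [_ [lo [hi _]]]]]]; nia. Qed.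

End Classification.

Lemma inBminus_two p (e d : int) : ~ inBminus p (2, e, d).
Proof. by case=> _; rewrite ltr_half_pred => e_gt _ gap _; lia. Qed.

Theorem lemma5 (p : nat) (hp : prime p) :
  (forall r e d : int, (inU p (r, e, d) /\ d = r) <-> inBplus p (r, e, d)) /\
  (forall r e d : int, (inU p (r, e, d) /\ d = r - 1) <-> inB0 p (r, e, d)) /\
  (forall r e d : int,
      (inU p (r, e, d) /\ r = 2) <-> (inB p (r, e, d) /\ r = 2)).
Proof.
have diag r e d : (inU p (r, e, d) /\ d = r) <-> inBplus p (r, e, d).
  split=> [[U_red d_eq] | B_red]; first by subst d; apply/(inU_diag p hp).
  by case: (B_red) => _ _ _ d_eq; subst d; split; first exact/(inU_diag p hp).
have subdiag r e d : (inU p (r, e, d) /\ d = r - 1) <-> inB0 p (r, e, d).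
  split=> [[U_red d_eq] | B_red]; first by subst d; apply/(inU_subdiag p hp).
  have [_ [_ [_ [_ [_ d_eq]]]]] := B_red; subst d.
  by split; first exact/(inU_subdiag p hp).
split=> //; split=> // r e d.
split=> [[U_2ed r2] | [B r2]]; subst r; split=> //.
  have [d2|d1] := inU_two_diag_or_subdiag p hp e d U_2ed; subst d.
    by left; apply/diag.
  by right; left; apply/subdiag.
by case: B => [/diag[] | [/subdiag[] | /inBminus_two]].
Qed.
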